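(* Let $s_1=M[-1,1,0,0]+M[-1,-1,1,0]+M[1,-1,1,1]$. Then for every $n\ge2$, $$x_ns_1=x_{n+1}+q\,x_{n-1}y_1y_2$$ in the quantum cluster algebra $\mathcal{A}_q(B,\Lambda)$ of Kronecker type.
   Context: Based quantum torus: basis $M[a]$, $a\in\mathbb{Z}^4$, $M[a]M[b]=q^{\frac12a^T\Lambda b}M[a+b]$, with $B=\begin{pmatrix}0&2\\-2&0\\1&0\\0&1\end{pmatrix}$, $\Lambda=\begin{pmatrix}0&0&-1&0\\0&0&0&-1\\1&0&0&-2\\0&1&2&0\end{pmatrix}$; $x_1=M[e_1],x_2=M[e_2],y_1=M[e_3],y_2=M[e_4]$. $\mathcal{A}_q(B,\Lambda)$ is the Berenstein–Zelevinsky quantum cluster algebra; quantum mutation at $k$ replaces $x'_k$ by $M_{\Lambda'}[-e_k+\sum_{b'_{ik}>0}b'_{ik}e_i]+M_{\Lambda'}[-e_k-\sum_{b'_{ik}<0}b'_{ik}e_i]$. For $m\ge0$, $x_{m+3}$ is the quantum cluster variable produced at the $(m+1)$-st step of mutating the initial seed successively at $1,2,1,2,\dots$; e.g. $x_3=M[-1,2,0,0]+M[-1,0,1,0]$. *)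

(* Based quantum torus T over Z[v,v^-1], v = q^{1/2}, with basis M[a], a in Z^4,
   and product M[a]M[b] = v^{a^T Lambda b} M[a+b] (Lambda = initial Lambda).   *)
From Stdlib Require Import ZArith List Bool.
Import ListNotations.
Open Scope Z_scope.

Definition vec : Type := (Z * Z * Z * Z)%type.

Definition vget (a : vec) (i : nat) : Z :=
  match a with (a0, a1, a2, a3) =>
    match i with 0%nat => a0 | 1%nat => a1 | 2%nat => a2 | 3%nat => a3 | _ => 0 end
  end.

Definition vadd (a b : vec) : vec :=
  match a, b with (a0,a1,a2,a3), (b0,b1,b2,b3) => (a0+b0, a1+b1, a2+b2, a3+b3) end.

Definition vec_of (f : nat -> Z) : vec := (f 0%nat, f 1%nat, f 2%nat, f 3%nat).

Definition vunit (i : nat) : vec := vec_of (fun j => if Nat.eqb i j then 1 else 0).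

Definition veqb (a b : vec) : bool :=
  match a, b with (a0,a1,a2,a3), (b0,b1,b2,b3) =>
    Z.eqb a0 b0 && Z.eqb a1 b1 && Z.eqb a2 b2 && Z.eqb a3 b3 end.

Definition sum4 (f : nat -> Z) : Z := f 0%nat + f 1%nat + f 2%nat + f 3%nat.

Definition bform (L : nat -> nat -> Z) (a b : vec) : Z :=
  sum4 (fun i => sum4 (fun j => vget a i * L i j * vget b j)).

(* the initial matrices (0-based indices) *)
Definition B0 (i j : nat) : Z :=
  match i, j with
  | 0%nat, 1%nat => 2
  | 1%nat, 0%nat => -2
  | 2%nat, 0%nat => 1
  | 3%nat, 1%nat => 1
  | _, _ => 0
  end.

Definition Lambda0 (i j : nat) : Z :=
  match i, j with
  | 0%nat, 2%nat => -1
  | 1%nat, 3%nat => -1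
  | 2%nat, 0%nat => 1
  | 2%nat, 3%nat => -2
  | 3%nat, 1%nat => 1
  | 3%nat, 2%nat => 2
  | _, _ => 0
  end.

(* a term (c, k, a) stands for c * v^k * M[a]; an element is a finite sum of terms *)
Definition term : Type := (Z * Z * vec)%type.
Definition tor : Type := list term.

Definition coeff (t : tor) (k : Z) (a : vec) : Z :=
  fold_right (fun (x : term) acc =>
     match x with (c, k', a') =>
       if Z.eqb k k' && veqb a a' then c + acc else acc end) 0 t.

Definition teq (t u : tor) : Prop := forall k a, coeff t k a = coeff u k a.

Definition tzero : tor := [].
Definition tadd (t u : tor) : tor := t ++ u.
Definition M (a : vec) : tor := [(1, 0, a)].
Definition tone : tor := M (0,0,0,0).

(* multiplication by the central scalar v^j = q^{j/2} *)
Definition tscale (j : Z) (t : tor) : tor :=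
  map (fun x : term => match x with (c, k, a) => (c, k + j, a) end) t.

Definition tmul (t u : tor) : tor :=
  flat_map (fun x : term => match x with (c1, k1, a) =>
     map (fun y : term => match y with (c2, k2, b) =>
        (c1 * c2, k1 + k2 + bform Lambda0 a b, vadd a b) end) u end) t.

Fixpoint tpow (t : tor) (n : nat) : tor :=
  match n with 0%nat => tone | S n' => tmul t (tpow t n') end.

(* mutation direction at step m (0-based: 0 stands for index 1, 1 for index 2) *)
Definition kidx (m : nat) : nat := if Nat.even m then 0%nat else 1%nat.

Definition mutB (k : nat) (B : nat -> nat -> Z) (i j : nat) : Z :=
  if Nat.eqb i k || Nat.eqb j k then - B i j
  else B i j + (Z.abs (B i k) * B k j + B i k * Z.abs (B k j)) / 2.

(* Berenstein-Zelevinsky: Lambda' = E^T Lambda E, E = E_{+} for direction k *)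
Definition Emat (k : nat) (B : nat -> nat -> Z) (i j : nat) : Z :=
  if Nat.eqb j k then (if Nat.eqb i k then -1 else Z.max 0 (- B i k))
  else (if Nat.eqb i j then 1 else 0).

Definition mutL (k : nat) (B L : nat -> nat -> Z) (i j : nat) : Z :=
  sum4 (fun a => sum4 (fun b => Emat k B a i * L a b * Emat k B b j)).

Fixpoint Bseq (m : nat) : nat -> nat -> Z :=
  match m with 0%nat => B0 | S m' => mutB (kidx m') (Bseq m') end.

Fixpoint Lseq (m : nat) : nat -> nat -> Z :=
  match m with 0%nat => Lambda0 | S m' => mutL (kidx m') (Bseq m') (Lseq m') end.

(* toric frame of a cluster X (X i, i < 4) with matrix L, at c with c_i >= 0:
   M(c) = q^{-1/2 sum_{i<j} c_i c_j L_ij} X_0^{c_0} X_1^{c_1} X_2^{c_2} X_3^{c_3} *)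
Definition frame (X : nat -> tor) (L : nat -> nat -> Z) (c : vec) : tor :=
  tscale (- sum4 (fun i => sum4 (fun j =>
              if Nat.ltb i j then vget c i * vget c j * L i j else 0)))
    (tmul (tpow (X 0%nat) (Z.to_nat (vget c 0)))
      (tmul (tpow (X 1%nat) (Z.to_nat (vget c 1)))
        (tmul (tpow (X 2%nat) (Z.to_nat (vget c 2)))
              (tpow (X 3%nat) (Z.to_nat (vget c 3)))))).

(* The new variable
     X'_k = M(-e_k + [b_k]_+) + M(-e_k + [-b_k]_+)
   (M the current toric frame) is characterised, in the (Ore) domain T, by
     X'_k X_k = v^{(v+)^T L e_k} M(v+) + v^{(v-)^T L e_k} M(v-),
   since M(-e_k + w) M(e_k) = q^{1/2 w^T L e_k} M(w) for L skew-symmetric. *)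
Definition exch_rhs (X : nat -> tor) (B L : nat -> nat -> Z) (k : nat) : tor :=
  let vp := vec_of (fun i => Z.max 0 (B i k)) in
  let vm := vec_of (fun i => Z.max 0 (- B i k)) in
  tadd (tscale (bform L vp (vunit k)) (frame X L vp))
       (tscale (bform L vm (vunit k)) (frame X L vm)).

(* S m i = i-th element (i < 4) of the extended cluster after m mutations *)
Definition valid_seq (X : nat -> nat -> tor) : Prop :=
  (forall i, (i < 4)%nat -> teq (X 0%nat i) (M (vunit i))) /\
  (forall m : nat,
     (forall i, (i < 4)%nat -> i <> kidx m -> teq (X (S m) i) (X m i)) /\
     teq (tmul (X (S m) (kidx m)) (X m (kidx m)))
         (exch_rhs (X m) (Bseq m) (Lseq m) (kidx m))).

(* the cluster variables x_n, n >= 1:  x_1, x_2 initial, x_{m+3} produced at step m+1 *)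
Definition xvar (X : nat -> nat -> tor) (n : nat) : tor :=
  match n with
  | 0%nat => tzero
  | 1%nat => X 0%nat 0%nat
  | 2%nat => X 0%nat 1%nat
  | S (S (S m)) => X (S m) (kidx m)
  end.

Definition y1 : tor := M (0,0,1,0).
Definition y2 : tor := M (0,0,0,1).

Definition s1 : tor :=
  tadd (M (-1,1,0,0)) (tadd (M (-1,-1,1,0)) (M (1,-1,1,1))).

(* Let x_1 = M[e_1], x_2 = M[e_2] and x_{n+2} = x_{n+1} s_1 - x_n W, where
   W = M[0,0,1,1] = q y_1 y_2 (in the code, x_{n+1} is [xs n] and W is [y12]).
   W commutes with s_1 and q-commutes with x_1 and x_2, hence with every x_n; with the
   left-handed recurrence x_{n+2} = s_1 x_{n+1} - W x_n, which follows, this makes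
   x_{n+2} x_n - x_{n+1}^2 get multiplied by q W at each step, so that
   x_{m+3} x_{m+1} = q^{1/2} M[0,0,m+1,m] + x_{m+2}^2.  These are exactly the exchange
   relations of the seeds along the mutation sequence 1,2,1,2,..., whose matrices have a
   closed form.  The quantum torus has no zero divisors (compare leading terms in a
   lexicographic order), so the exchange relations determine the quantum cluster variables:
   they are the x_n, and the theorem is the defining recurrence. *)

From Stdlib Require Import ZArith List Bool Lia Setoid Morphisms FunctionalExtensionality.
Import ListNotations.
Open Scope Z_scope.

Definition vsub (a b : vec) : vec :=
  match a, b with (a0,a1,a2,a3), (b0,b1,b2,b3) => (a0-b0, a1-b1, a2-b2, a3-b3) end.

Ltac destruct_vecs :=
  repeat match goal with a : vec |- _ => destruct a as [[[? ?] ?] ?] end.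

Lemma vec_eq (a0 a1 a2 a3 b0 b1 b2 b3 : Z) :
  a0 = b0 -> a1 = b1 -> a2 = b2 -> a3 = b3 -> ((a0, a1, a2, a3) : vec) = (b0, b1, b2, b3).
Proof. intros; subst; reflexivity. Qed.

Ltac vec_lia := destruct_vecs; simpl in *; apply vec_eq; lia.

Lemma veqb_spec a b : veqb a b = true <-> a = b.
Proof.
  destruct_vecs; simpl. rewrite !andb_true_iff, !Z.eqb_eq.
  split; [intros [[[-> ->] ->] ->]; reflexivity | intros E; inversion E; auto].
Qed.

Lemma veqb_refl a : veqb a a = true.
Proof. apply veqb_spec; reflexivity. Qed.

Lemma vadd_eq_vsub_l a b c : vadd a b = c <-> vsub c a = b.
Proof. split; intros E; subst; [|symmetry]; vec_lia. Qed.

Lemma vadd_eq_vsub_r a b c : vadd a b = c <-> vsub c b = a.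
Proof. split; intros E; subst; [|symmetry]; vec_lia. Qed.

Lemma vsub_vadd a b : vsub (vadd a b) a = b.
Proof. vec_lia. Qed.

Lemma bform_addl L a b c : bform L (vadd a b) c = bform L a c + bform L b c.
Proof. destruct_vecs; unfold bform, sum4; simpl; ring. Qed.

Lemma bform_addr L a b c : bform L a (vadd b c) = bform L a b + bform L a c.
Proof. destruct_vecs; unfold bform, sum4; simpl; ring. Qed.

Definition zsum (f : term -> Z) (l : tor) : Z := fold_right (fun x acc => f x + acc) 0 l.

Lemma zsum_app f l1 l2 : zsum f (l1 ++ l2) = zsum f l1 + zsum f l2.
Proof. induction l1; simpl; lia. Qed.

Lemma zsum_ext_in f g l : (forall x, In x l -> f x = g x) -> zsum f l = zsum g l.
Proof. induction l; simpl; intros H; auto. rewrite H, IHl; auto. Qed.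

Lemma zsum_ext f g l : (forall x, f x = g x) -> zsum f l = zsum g l.
Proof. intros; apply zsum_ext_in; auto. Qed.

Lemma zsum_zero f l : (forall x, f x = 0) -> zsum f l = 0.
Proof. intros H. induction l; simpl; auto. rewrite H, IHl; auto. Qed.

Lemma zsum_add f g l : zsum (fun x => f x + g x) l = zsum f l + zsum g l.
Proof. induction l; simpl; lia. Qed.

Lemma zsum_opp f l : zsum (fun x => - f x) l = - zsum f l.
Proof. induction l; simpl; lia. Qed.

Lemma zsum_mull c f l : zsum (fun x => c * f x) l = c * zsum f l.
Proof. induction l; simpl; lia. Qed.

Lemma zsum_mulr c f l : zsum (fun x => f x * c) l = zsum f l * c.
Proof. induction l; simpl; lia. Qed.

Lemma zsum_map f g l : zsum f (map g l) = zsum (fun x => f (g x)) l.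
Proof. induction l; simpl; lia. Qed.

Lemma zsum_comm (F : term -> term -> Z) l1 l2 :
  zsum (fun x => zsum (F x) l2) l1 = zsum (fun y => zsum (fun x => F x y) l1) l2.
Proof.
  induction l1; simpl.
  - symmetry; apply zsum_zero; reflexivity.
  - rewrite IHl1, <- zsum_add. reflexivity.
Qed.

Definition matchb (k : Z) (a : vec) (x : term) : bool :=
  match x with (_, k', a') => Z.eqb k k' && veqb a a' end.

Definition cf (x : term) : Z := match x with (c, _, _) => c end.

Lemma matchb_spec k a x : matchb k a x = true <-> x = (cf x, k, a).
Proof.
  destruct x as [[c k'] a']; simpl. rewrite andb_true_iff, Z.eqb_eq, veqb_spec.
  split; [intros [-> ->]; reflexivity | intros E; inversion E; auto].
Qed.

Lemma coeff_zsum t k a : coeff t k a = zsum (fun x => if matchb k a x then cf x else 0) t.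
Proof.
  induction t as [|[[c k'] a'] t IH]; simpl; auto. rewrite IH. destruct (_ && _); lia.
Qed.

Lemma coeff_app t u k a : coeff (t ++ u) k a = coeff t k a + coeff u k a.
Proof. rewrite !coeff_zsum, zsum_app; reflexivity. Qed.

Lemma coeff_add t u k a : coeff (tadd t u) k a = coeff t k a + coeff u k a.
Proof. apply coeff_app. Qed.

Definition tneg (t : tor) : tor :=
  map (fun x : term => match x with (c, k, a) => (-c, k, a) end) t.

Lemma coeff_neg t k a : coeff (tneg t) k a = - coeff t k a.
Proof.
  rewrite !coeff_zsum, <- zsum_opp; unfold tneg; rewrite zsum_map.
  apply zsum_ext; intros [[c k'] a']; simpl; destruct (_ && _); lia.
Qed.

Lemma coeff_scale j t k a : coeff (tscale j t) k a = coeff t (k - j) a.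
Proof.
  rewrite !coeff_zsum; unfold tscale; rewrite zsum_map. apply zsum_ext.
  intros [[c k'] a']; simpl.
  destruct (Z.eqb_spec k (k' + j)), (Z.eqb_spec (k - j) k'); simpl; auto; lia.
Qed.

Lemma coeff_notin t k a : (forall x, In x t -> matchb k a x = false) -> coeff t k a = 0.
Proof.
  intros H. rewrite coeff_zsum. induction t as [|x t IH]; simpl in *; auto.
  rewrite H, IH; auto.
Qed.

Lemma coeff_filter p b t k a : (forall x, matchb k a x = true -> p x = b) ->
  coeff (filter p t) k a = if b then coeff t k a else 0.
Proof.
  intros H. rewrite !coeff_zsum. induction t as [|x t IH]; simpl; [destruct b; auto|].
  destruct (matchb k a x) eqn:E.
  - rewrite (H x E); destruct b; simpl; rewrite ?E, IH; auto.
  - destruct (p x); simpl; rewrite ?E, IH; destruct b; auto.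
Qed.

Lemma coeff_mul_l t u k a :
  coeff (tmul t u) k a =
  zsum (fun x => match x with (c, k1, a1) =>
          c * coeff u (k - k1 - bform Lambda0 a1 (vsub a a1)) (vsub a a1) end) t.
Proof.
  induction t as [|[[c k1] a1] t IH]; simpl; auto.
  rewrite coeff_app, IH. f_equal.
  rewrite !coeff_zsum, zsum_map, <- zsum_mull. apply zsum_ext.
  intros [[c2 k2] b]; simpl.
  destruct (veqb (vsub a a1) b) eqn:E.
  - apply veqb_spec, vadd_eq_vsub_l in E. rewrite <- E, vsub_vadd, !veqb_refl.
    destruct (Z.eqb_spec k (k1 + k2 + bform Lambda0 a1 b)),
      (Z.eqb_spec (k - k1 - bform Lambda0 a1 b) k2); simpl; lia.
  - replace (veqb a (vadd a1 b)) with false; [rewrite !andb_false_r; lia|].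
    symmetry; apply not_true_iff_false; rewrite veqb_spec; intros E'.
    symmetry in E'; apply vadd_eq_vsub_l in E'; rewrite E', veqb_refl in E; discriminate.
Qed.

Lemma coeff_mul_r t u k a :
  coeff (tmul t u) k a =
  zsum (fun y => match y with (c2, k2, b) =>
          c2 * coeff t (k - k2 - bform Lambda0 (vsub a b) b) (vsub a b) end) u.
Proof.
  induction t as [|[[c k1] a1] t IH]; simpl.
  - symmetry; apply zsum_zero; intros [[? ?] ?]; lia.
  - rewrite coeff_app, IH, !coeff_zsum, zsum_map, <- zsum_add. apply zsum_ext.
    intros [[c2 k2] b]; simpl.
    destruct (veqb (vsub a b) a1) eqn:E.
    + apply veqb_spec, vadd_eq_vsub_r in E. rewrite <- E, !veqb_refl.
      replace (vsub (vadd a1 b) b) with a1 by vec_lia.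
      destruct (Z.eqb_spec k (k1 + k2 + bform Lambda0 a1 b)),
        (Z.eqb_spec (k - k2 - bform Lambda0 a1 b) k1); simpl; lia.
    + replace (veqb a (vadd a1 b)) with false; [rewrite !andb_false_r; lia|].
      symmetry; apply not_true_iff_false; rewrite veqb_spec; intros E'.
      symmetry in E'; apply vadd_eq_vsub_r in E'; rewrite E', veqb_refl in E; discriminate.
Qed.

#[export] Instance teq_equiv : Equivalence teq.
Proof. split; unfold teq; [intros t k a | intros t u H k a | intros t u w H1 H2 k a];
  rewrite ?H1; auto. Qed.

Infix "≈" := teq (at level 70).

#[export] Instance tadd_proper : Proper (teq ==> teq ==> teq) tadd.
Proof. intros t t' H u u' H' k a; rewrite !coeff_add, H, H'; reflexivity. Qed.

#[export] Instance tscale_proper j : Proper (teq ==> teq) (tscale j).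
Proof. intros t t' H k a; rewrite !coeff_scale, H; reflexivity. Qed.

#[export] Instance tneg_proper : Proper (teq ==> teq) tneg.
Proof. intros t t' H k a; rewrite !coeff_neg, H; reflexivity. Qed.

#[export] Instance tmul_proper : Proper (teq ==> teq ==> teq) tmul.
Proof.
  intros t t' H u u' H' k a. transitivity (coeff (tmul t' u) k a).
  - rewrite !coeff_mul_r. apply zsum_ext. intros [[c k2] b]. rewrite H; reflexivity.
  - rewrite !coeff_mul_l. apply zsum_ext. intros [[c k1] b]. rewrite H'; reflexivity.
Qed.

Lemma coeff_tzero k a : coeff tzero k a = 0.
Proof. reflexivity. Qed.

Ltac tor_lia := let k := fresh "k" in let a := fresh "a" in intros k a;
  repeat rewrite ?coeff_add, ?coeff_neg, ?coeff_scale, ?coeff_tzero; lia.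

Lemma tmul_addl t u w : tmul (tadd t u) w = tadd (tmul t w) (tmul u w).
Proof. apply flat_map_app. Qed.

Lemma tmul_addr t u w : tmul t (tadd u w) ≈ tadd (tmul t u) (tmul t w).
Proof. intros k a. rewrite coeff_add, !coeff_mul_r. apply zsum_app. Qed.

Lemma tmul_negl t u : tmul (tneg t) u ≈ tneg (tmul t u).
Proof.
  intros k a. rewrite coeff_neg, !coeff_mul_l, <- zsum_opp. unfold tneg. rewrite zsum_map.
  apply zsum_ext. intros [[c k1] b]. ring.
Qed.

Lemma tmul_negr t u : tmul t (tneg u) ≈ tneg (tmul t u).
Proof.
  intros k a. rewrite coeff_neg, !coeff_mul_r, <- zsum_opp. unfold tneg. rewrite zsum_map.
  apply zsum_ext. intros [[c k2] b]. ring.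
Qed.

Lemma tmul_scalel j t u : tmul (tscale j t) u ≈ tscale j (tmul t u).
Proof.
  intros k a. rewrite coeff_scale, !coeff_mul_l. unfold tscale. rewrite zsum_map.
  apply zsum_ext. intros [[c k1] b]. do 3 f_equal. ring.
Qed.

Lemma tmul_scaler j t u : tmul t (tscale j u) ≈ tscale j (tmul t u).
Proof.
  intros k a. rewrite coeff_scale, !coeff_mul_r. unfold tscale. rewrite zsum_map.
  apply zsum_ext. intros [[c k2] b]. do 3 f_equal. ring.
Qed.

Lemma tscale_0 t : tscale 0 t ≈ t.
Proof. intros k a. rewrite coeff_scale. f_equal. ring. Qed.

(* Associativity holds because [bform] is bilinear. *)
Lemma tmul_assoc t u w : tmul (tmul t u) w ≈ tmul t (tmul u w).
Proof.
  intros k a. rewrite coeff_mul_r, coeff_mul_l.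
  transitivity (zsum (fun z => zsum (fun x => match x, z with (c1,k1,a1), (c3,k3,a3) =>
    c3 * (c1 * coeff u (k - k3 - bform Lambda0 (vsub a a3) a3 - k1
                          - bform Lambda0 a1 (vsub (vsub a a3) a1))
                 (vsub (vsub a a3) a1)) end) t) w).
  { apply zsum_ext. intros [[c3 k3] a3]. rewrite coeff_mul_l, <- zsum_mull.
    apply zsum_ext. intros [[c1 k1] a1]. reflexivity. }
  rewrite <- zsum_comm. apply zsum_ext. intros [[c1 k1] a1].
  rewrite coeff_mul_r, <- zsum_mull. apply zsum_ext. intros [[c3 k3] a3].
  set (b := vsub (vsub a a1) a3).
  replace (vsub a a3) with (vadd a1 b) by (unfold b; vec_lia).
  replace (vsub a a1) with (vadd b a3) by (unfold b; vec_lia).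
  rewrite vsub_vadd. replace (vsub (vadd b a3) a3) with b by vec_lia.
  rewrite !bform_addl, !bform_addr.
  match goal with |- _ * (_ * coeff u ?x _) = _ * (_ * coeff u ?y _) =>
    replace x with y by ring end.
  ring.
Qed.

Lemma tmul_1l t : tmul tone t ≈ t.
Proof.
  intros k a. rewrite coeff_mul_l. unfold tone, M. cbn [zsum fold_right].
  replace (vsub a (0,0,0,0)) with a by vec_lia.
  replace (bform Lambda0 (0,0,0,0) a) with 0
    by (destruct_vecs; unfold bform, sum4; simpl; ring).
  replace (k - 0 - 0) with k by ring. ring.
Qed.

Lemma tmul_1r t : tmul t tone ≈ t.
Proof.
  intros k a. rewrite coeff_mul_r. unfold tone, M. cbn [zsum fold_right].
  replace (vsub a (0,0,0,0)) with a by vec_lia.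
  replace (bform Lambda0 a (0,0,0,0)) with 0
    by (destruct_vecs; unfold bform, sum4; simpl; ring).
  replace (k - 0 - 0) with k by ring. ring.
Qed.

#[export] Instance tpow_proper : Proper (teq ==> eq ==> teq) tpow.
Proof. intros t t' H n n' <-. induction n; simpl; [reflexivity|]. apply tmul_proper; auto. Qed.

Lemma teq_single c k a c' k' a' : c = c' -> k = k' -> a = a' -> [(c,k,a)] ≈ [(c',k',a')].
Proof. intros -> -> ->; reflexivity. Qed.

Definition teqb (t u : tor) : bool :=
  forallb (fun x : term => match x with (_, k, a) => Z.eqb (coeff t k a) (coeff u k a) end)
    (t ++ u).

(* Both sides vanish at keys occurring in neither list. *)
Lemma teqb_sound t u : teqb t u = true -> t ≈ u.
Proof.
  unfold teqb. rewrite forallb_forall. intros H k a.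
  destruct (existsb (matchb k a) (t ++ u)) eqn:E.
  - apply existsb_exists in E. destruct E as [x [Hx Hm]].
    apply matchb_spec in Hm. rewrite Hm in Hx. apply Z.eqb_eq, (H _ Hx).
  - assert (Hn : forall x, In x (t ++ u) -> matchb k a x = false).
    { intros x Hx. apply not_true_iff_false. intros Hm. rewrite <- not_true_iff_false in E.
      apply E, existsb_exists. eauto. }
    rewrite !coeff_notin; auto; intros x Hx; apply Hn, in_or_app; auto.
Qed.

Ltac by_computation := apply teqb_sound; vm_compute; reflexivity.

Definition vlt (a b : vec) : Prop :=
  match a, b with (a0,a1,a2,a3), (b0,b1,b2,b3) =>
    a0 < b0 \/ (a0 = b0 /\ (a1 < b1 \/ (a1 = b1 /\ (a2 < b2 \/ (a2 = b2 /\ a3 < b3))))) end.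

(* Keys [(k, a)] of terms [v^k M[a]] are compared on [a] first, so that the order is
   compatible with [tmul]. *)
Definition keylt (k : Z) (a : vec) (l : Z) (b : vec) : Prop := vlt a b \/ (a = b /\ k < l).

Definition termlt (x y : term) : Prop :=
  match x, y with (_, k, a), (_, l, b) => keylt k a l b end.

Lemma keylt_irrefl k a : ~ keylt k a k a.
Proof. destruct_vecs; unfold keylt; simpl; lia. Qed.

Lemma keylt_trans k a l b m c : keylt k a l b -> keylt l b m c -> keylt k a m c.
Proof.
  unfold keylt. intros [H1|[-> H1]] [H2|[-> H2]].
  - left. destruct_vecs; simpl in *; lia.
  - left; exact H1.
  - left; exact H2.
  - right; split; [reflexivity|lia].
Qed.

Lemma keylt_total k a l b : keylt k a l b \/ (k = l /\ a = b) \/ keylt l b k a.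
Proof.
  unfold keylt. destruct (veqb a b) eqn:E.
  - apply veqb_spec in E as ->.
    destruct (Z.lt_trichotomy k l) as [H|[H|H]]; auto.
  - destruct_vecs. cbn [veqb] in E. rewrite !andb_false_iff, !Z.eqb_neq in E.
    simpl. lia.
Qed.

Lemma max_exists (l : tor) : l <> [] -> exists x, In x l /\ forall y, In y l -> ~ termlt x y.
Proof.
  induction l as [|x l IH]; [congruence|]. intros _.
  destruct l as [|x' l'].
  - exists x. split; [left; reflexivity|]. intros y [<-|[]]. destruct x as [[? ?] ?].
    apply keylt_irrefl.
  - destruct IH as [m [Hm Hmax]]; [congruence|].
    destruct m as [[cm km] am], x as [[cx kx] ax].
    destruct (keylt_total km am kx ax) as [Hlt|Hnlt].
    + exists (cx, kx, ax). split; [left; reflexivity|]. intros [[cy ky] ay] [Hy|Hy].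
      * inversion Hy; subst. apply keylt_irrefl.
      * intros Hxy. apply (Hmax _ Hy). simpl. eapply keylt_trans; eauto.
    + exists (cm, km, am). split; [right; exact Hm|]. intros y [<-|Hy]; auto.
      simpl. destruct Hnlt as [[-> ->]|Hgt]; [apply keylt_irrefl|].
      intros Hlt. apply (keylt_irrefl kx ax). eapply keylt_trans; eauto.
Qed.

Lemma keylt_shift k a k' a' kx ax :
  keylt kx ax k a ->
  keylt k' a' (k + k' + bform Lambda0 a a' - kx - bform Lambda0 ax (vsub (vadd a a') ax))
              (vsub (vadd a a') ax).
Proof.
  unfold keylt. intros [H|[-> H]].
  - left. destruct_vecs; simpl in *; lia.
  - right. rewrite vsub_vadd. split; [reflexivity|lia].
Qed.

Definition tclean (t : tor) : tor :=
  filter (fun x : term => match x with (_, k, a) => negb (Z.eqb (coeff t k a) 0) end) t.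

Lemma coeff_tclean t k a : coeff (tclean t) k a = coeff t k a.
Proof.
  unfold tclean. rewrite (coeff_filter _ (negb (Z.eqb (coeff t k a) 0))).
  - destruct (Z.eqb_spec (coeff t k a) 0); simpl; auto.
  - intros x Hx. apply matchb_spec in Hx. rewrite Hx. reflexivity.
Qed.

Lemma tclean_nil t : tclean t = [] -> t ≈ tzero.
Proof. intros E k a. rewrite <- coeff_tclean, E. reflexivity. Qed.

Lemma lead_exists t : tclean t <> [] ->
  exists k a, coeff t k a <> 0 /\
    forall k' a', keylt k a k' a' -> coeff (tclean t) k' a' = 0.
Proof.
  intros Hne. destruct (max_exists _ Hne) as [[[c k] a] [Hin Hmax]].
  exists k, a. split.
  - unfold tclean in Hin. apply filter_In in Hin as [_ Hin].
    apply negb_true_iff, Z.eqb_neq in Hin. exact Hin.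
  - intros k' a' Hlt. apply coeff_notin. intros x Hx.
    apply not_true_iff_false. intros Hm. apply matchb_spec in Hm. rewrite Hm in Hx.
    exact (Hmax _ Hx Hlt).
Qed.

(* The leading coefficient of a product is the product of the leading coefficients. *)
Lemma no_zero_divisors D Y : ~ Y ≈ tzero -> tmul D Y ≈ tzero -> D ≈ tzero.
Proof.
  intros HY HDY.
  destruct (tclean D) as [|x D'] eqn:ED; [apply tclean_nil; exact ED|]. exfalso.
  assert (HneD : tclean D <> []) by congruence.
  assert (HneY : tclean Y <> []) by (intros E; apply HY, tclean_nil, E).
  destruct (max_exists _ HneD) as [[[c0 k0] a0] [Hin Hmax]].
  assert (Hc0 : coeff D k0 a0 <> 0).
  { unfold tclean in Hin. apply filter_In in Hin as [_ Hin].
    apply negb_true_iff, Z.eqb_neq in Hin. exact Hin. }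
  destruct (lead_exists Y HneY) as [kY [aY [HcY HabY]]].
  assert (E : coeff (tmul (tclean D) (tclean Y)) (k0 + kY + bform Lambda0 a0 aY) (vadd a0 aY)
              = coeff D k0 a0 * coeff Y kY aY).
  { rewrite coeff_mul_l, <- coeff_tclean, coeff_zsum, <- zsum_mulr.
    apply zsum_ext_in. intros [[c k1] a1] Hx.
    destruct (matchb k0 a0 (c, k1, a1)) eqn:Em.
    - apply matchb_spec in Em. inversion Em; subst.
      rewrite vsub_vadd, coeff_tclean. do 2 f_equal. ring.
    - rewrite HabY; [ring|]. apply keylt_shift.
      destruct (keylt_total k1 a1 k0 a0) as [Hl|[[-> ->]|Hl]]; auto.
      + simpl in Em. rewrite Z.eqb_refl, veqb_refl in Em. discriminate.
      + exfalso. exact (Hmax _ Hx Hl). }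
  assert (HDY' : tmul (tclean D) (tclean Y) ≈ tzero).
  { rewrite <- HDY. intros k a. apply tmul_proper; intros ? ?; apply coeff_tclean. }
  rewrite (HDY' _ _) in E. simpl in E. symmetry in E. apply Z.mul_eq_0 in E. tauto.
Qed.

Lemma tmul_cancel_r Y A B : ~ Y ≈ tzero -> tmul A Y ≈ tmul B Y -> A ≈ B.
Proof.
  intros HY H.
  assert (Hd : tadd A (tneg B) ≈ tzero).
  { apply (no_zero_divisors _ Y HY). rewrite tmul_addl, tmul_negl, H. tor_lia. }
  intros k a. specialize (Hd k a). rewrite coeff_add, coeff_neg, coeff_tzero in Hd. lia.
Qed.

(* Evaluation at [v = 1], [M[a] = 1]: a ring morphism to [Z]. *)
Definition tsum (t : tor) : Z := zsum cf t.

Lemma tsum_add t u : tsum (tadd t u) = tsum t + tsum u.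
Proof. apply zsum_app. Qed.

Lemma tsum_neg t : tsum (tneg t) = - tsum t.
Proof.
  unfold tsum, tneg. rewrite zsum_map, <- zsum_opp. apply zsum_ext. intros [[c k] a]; reflexivity.
Qed.

Lemma tsum_mul t u : tsum (tmul t u) = tsum t * tsum u.
Proof.
  unfold tsum, tmul. induction t as [|[[c k] a] t IH]; simpl; auto.
  rewrite zsum_app, IH, zsum_map, Z.mul_add_distr_r. f_equal.
  rewrite <- zsum_mull. apply zsum_ext. intros [[c2 k2] b]; reflexivity.
Qed.

Lemma tsum_filter p t :
  tsum t = tsum (filter p t) + tsum (filter (fun x => negb (p x)) t).
Proof. unfold tsum. induction t as [|x t IH]; simpl; auto. destruct (p x); simpl; lia. Qed.

Lemma tsum_filter_matchb k a t : tsum (filter (matchb k a) t) = coeff t k a.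
Proof.
  unfold tsum. rewrite coeff_zsum. induction t as [|x t IH]; simpl; auto.
  destruct (matchb k a x); simpl; lia.
Qed.

Lemma tsum_teq0 t : t ≈ tzero -> tsum t = 0.
Proof.
  remember (length t) as n. revert t Heqn. induction n as [n IH] using lt_wf_ind.
  intros t Hn H. destruct t as [|[[c k0] a0] t']; [reflexivity|].
  rewrite (tsum_filter (matchb k0 a0)), tsum_filter_matchb, (H k0 a0).
  set (rest := filter (fun x => negb (matchb k0 a0 x)) ((c, k0, a0) :: t')).
  assert (Hrest : rest ≈ (c, k0, a0) :: t').
  { intros k a. unfold rest.
    rewrite (coeff_filter _ (negb (Z.eqb k0 k && veqb a0 a))).
    - destruct (Z.eqb_spec k0 k), (veqb a0 a) eqn:Ea; simpl; auto.
      apply veqb_spec in Ea. subst. symmetry. apply H.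
    - intros x Hx. apply matchb_spec in Hx. rewrite Hx. reflexivity. }
  assert (Hlt : (length rest < n)%nat).
  { subst n rest. simpl. rewrite Z.eqb_refl, veqb_refl. simpl.
    pose proof (filter_length_le (fun x => negb (matchb k0 a0 x)) t'). lia. }
  change (coeff tzero k0 a0 + tsum rest = 0).
  rewrite (IH _ Hlt rest eq_refl); [reflexivity|].
  rewrite Hrest. exact H.
Qed.

Lemma nat_ind2 (P : nat -> Prop) :
  P 0%nat -> P 1%nat -> (forall n, P n -> P (S n) -> P (S (S n))) -> forall n, P n.
Proof.
  intros H0 H1 HS n. enough (P n /\ P (S n)) by tauto.
  induction n as [|n [IHn IHSn]]; auto.
Qed.

Section Recurrence.

Variables (s w : tor) (x : nat -> tor).
Hypothesis x_rec : forall n, x (S (S n)) ≈ tadd (tmul (x (S n)) s) (tneg (tmul (x n) w)).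

Lemma rec_qcomm : tmul w s ≈ tmul s w ->
  tmul w (x 0) ≈ tscale 2 (tmul (x 0) w) -> tmul w (x 1) ≈ tscale 2 (tmul (x 1) w) ->
  forall n, tmul w (x n) ≈ tscale 2 (tmul (x n) w).
Proof.
  intros w_s H0 H1. apply nat_ind2; auto. intros n HA HB.
  rewrite x_rec, tmul_addr, tmul_negr, tmul_addl, tmul_negl.
  rewrite <- (tmul_assoc w (x (S n)) s), <- (tmul_assoc w (x n) w), HA, HB, !tmul_scalel.
  rewrite (tmul_assoc (x (S n)) w s), w_s, <- (tmul_assoc (x (S n)) s w).
  tor_lia.
Qed.

Lemma rec_left :
  tmul s (x 1) ≈ tadd (x 2) (tmul w (x 0)) -> tmul s (x 2) ≈ tadd (x 3) (tmul w (x 1)) ->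
  forall n, tmul s (x (S n)) ≈ tadd (x (S (S n))) (tmul w (x n)).
Proof.
  intros H0 H1. apply (nat_ind2 (fun n => tmul s (x (S n)) ≈ tadd (x (S (S n))) (tmul w (x n))));
    auto.
  intros n HA HB.
  assert (Hw : tmul w (x (S (S n)))
               ≈ tadd (tmul (tmul w (x (S n))) s) (tneg (tmul (tmul w (x n)) w))).
  { rewrite x_rec, tmul_addr, tmul_negr, <- !tmul_assoc. reflexivity. }
  rewrite (x_rec (S (S n))), Hw.
  transitivity (tmul s (tadd (tmul (x (S (S n))) s) (tneg (tmul (x (S n)) w)))).
  { apply tmul_proper; [reflexivity | apply x_rec]. }
  rewrite tmul_addr, tmul_negr, <- !tmul_assoc, HA, HB, !tmul_addl.
  tor_lia.
Qed.

Lemma rec_exchange (p : nat -> tor) :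
  (forall n, tmul w (x n) ≈ tscale 2 (tmul (x n) w)) ->
  (forall n, tmul s (x (S n)) ≈ tadd (x (S (S n))) (tmul w (x n))) ->
  (forall n, p (S n) ≈ tscale 2 (tmul (p n) w)) ->
  tmul (x 2) (x 0) ≈ tadd (p 0%nat) (tmul (x 1) (x 1)) ->
  forall n, tmul (x (S (S n))) (x n) ≈ tadd (p n) (tmul (x (S n)) (x (S n))).
Proof.
  intros Hq Hl Hp H0 n. induction n as [|n IH]; auto.
  rewrite (x_rec (S n)), Hp, tmul_addl, tmul_negl.
  rewrite (tmul_assoc (x (S (S n))) s (x (S n))), (tmul_assoc (x (S n)) w (x (S n))).
  rewrite Hl, (Hq (S n)), tmul_addr, tmul_scaler, (Hq n), tmul_scaler.
  rewrite <- (tmul_assoc (x (S (S n))) (x n) w), IH.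
  rewrite <- (tmul_assoc (x (S n)) (x (S n)) w), tmul_addl.
  tor_lia.
Qed.

End Recurrence.

Definition y12 : tor := M (0,0,1,1).

Fixpoint xs (n : nat) : tor :=
  match n with
  | O => M (1,0,0,0)
  | S O => M (0,1,0,0)
  | S ((S n'') as n') => tadd (tmul (xs n') s1) (tneg (tmul (xs n'') y12))
  end.

Lemma xs_rec n : xs (S (S n)) ≈ tadd (tmul (xs (S n)) s1) (tneg (tmul (xs n) y12)).
Proof. reflexivity. Qed.

Lemma xs_qcomm n : tmul y12 (xs n) ≈ tscale 2 (tmul (xs n) y12).
Proof. apply (rec_qcomm s1 y12 xs xs_rec); by_computation. Qed.

Lemma xs_left_rec n : tmul s1 (xs (S n)) ≈ tadd (xs (S (S n))) (tmul y12 (xs n)).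
Proof. apply (rec_left s1 y12 xs xs_rec); by_computation. Qed.

Definition ycoef (m : nat) : tor := tscale 1 (M (0,0,Z.of_nat m + 1,Z.of_nat m)).

Lemma ycoef_S m : ycoef (S m) ≈ tscale 2 (tmul (ycoef m) y12).
Proof.
  unfold ycoef, tscale, tmul, M, y12. cbn [map flat_map app]. rewrite Nat2Z.inj_succ.
  apply teq_single; [ring | cbv beta iota delta [bform sum4 vget Lambda0]; ring | vec_lia].
Qed.

Lemma xs_exchange m : tmul (xs (S (S m))) (xs m) ≈ tadd (ycoef m) (tmul (xs (S m)) (xs (S m))).
Proof.
  apply (rec_exchange s1 y12 xs xs_rec ycoef xs_qcomm xs_left_rec ycoef_S).
  by_computation.
Qed.

Lemma tsum_xs n : 1 <= tsum (xs n) <= tsum (xs (S n)).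
Proof.
  induction n as [|n IH]; [vm_compute; split; discriminate|].
  split; [lia|].
  change (xs (S (S n))) with (tadd (tmul (xs (S n)) s1) (tneg (tmul (xs n) y12))).
  rewrite tsum_add, tsum_neg, !tsum_mul.
  change (tsum s1) with 3. change (tsum y12) with 1. lia.
Qed.

Lemma xs_nonzero n : ~ xs n ≈ tzero.
Proof. intros H. apply tsum_teq0 in H. pose proof (tsum_xs n). lia. Qed.

Definition B_even (z : Z) (i j : nat) : Z :=
  match i, j with
  | 0%nat, 1%nat => 2 | 1%nat, 0%nat => -2
  | 2%nat, 0%nat => z + 1 | 2%nat, 1%nat => - z
  | 3%nat, 0%nat => z | 3%nat, 1%nat => 1 - z
  | _, _ => 0 end.

Definition B_odd (z : Z) (i j : nat) : Z :=
  match i, j with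
  | 0%nat, 1%nat => -2 | 1%nat, 0%nat => 2
  | 2%nat, 0%nat => - z | 2%nat, 1%nat => z + 1
  | 3%nat, 0%nat => 1 - z | 3%nat, 1%nat => z
  | _, _ => 0 end.

Definition L_even (z : Z) (i j : nat) : Z :=
  match i, j with
  | 0%nat, 2%nat => z - 1 | 2%nat, 0%nat => 1 - z
  | 0%nat, 3%nat => - z | 3%nat, 0%nat => z
  | 1%nat, 2%nat => z | 2%nat, 1%nat => - z
  | 1%nat, 3%nat => -(z+1) | 3%nat, 1%nat => z + 1
  | 2%nat, 3%nat => -2 | 3%nat, 2%nat => 2
  | _, _ => 0 end.

Definition L_odd (z : Z) (i j : nat) : Z :=
  match i, j with
  | 0%nat, 2%nat => z | 2%nat, 0%nat => - z
  | 0%nat, 3%nat => -(z+1) | 3%nat, 0%nat => z + 1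
  | 1%nat, 2%nat => z - 1 | 2%nat, 1%nat => 1 - z
  | 1%nat, 3%nat => - z | 3%nat, 1%nat => z
  | 2%nat, 3%nat => -2 | 3%nat, 2%nat => 2
  | _, _ => 0 end.

Definition E_even (a i : nat) : Z :=
  if Nat.eqb i 0 then (match a with 0%nat => -1 | 1%nat => 2 | _ => 0 end)
  else if Nat.eqb a i then 1 else 0.

Definition E_odd (a i : nat) : Z :=
  if Nat.eqb i 1 then (match a with 1%nat => -1 | 0%nat => 2 | _ => 0 end)
  else if Nat.eqb a i then 1 else 0.

Ltac destruct_idx i := destruct i as [|[|[|[|i]]]].

Ltac matrix_ext :=
  let i := fresh "i" in let j := fresh "j" in
  apply functional_extensionality; intros i; apply functional_extensionality; intros j;
  destruct_idx i; destruct_idx j.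

Lemma Emat_even z : 0 <= z -> Emat 0 (B_even z) = E_even.
Proof. intros Hz. unfold Emat, E_even. matrix_ext; simpl; lia. Qed.

Lemma Emat_odd z : 0 <= z -> Emat 1 (B_odd z) = E_odd.
Proof. intros Hz. unfold Emat, E_odd. matrix_ext; simpl; lia. Qed.

Lemma mutB_even z : 0 <= z -> mutB 0 (B_even z) = B_odd (z + 1).
Proof.
  intros Hz. unfold mutB. matrix_ext; cbn [B_even B_odd Nat.eqb orb];
    Z.to_euclidean_division_equations; lia.
Qed.

Lemma mutB_odd z : 0 <= z -> mutB 1 (B_odd z) = B_even (z + 1).
Proof.
  intros Hz. unfold mutB. matrix_ext; cbn [B_even B_odd Nat.eqb orb];
    Z.to_euclidean_division_equations; lia.
Qed.

Lemma mutL_even z : 0 <= z -> mutL 0 (B_even z) (L_even z) = L_odd (z + 1).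
Proof.
  intros Hz. unfold mutL. rewrite Emat_even by exact Hz.
  matrix_ext; unfold sum4; cbn [L_even L_odd E_even Nat.eqb]; lia.
Qed.

Lemma mutL_odd z : 0 <= z -> mutL 1 (B_odd z) (L_odd z) = L_even (z + 1).
Proof.
  intros Hz. unfold mutL. rewrite Emat_odd by exact Hz.
  matrix_ext; unfold sum4; cbn [L_even L_odd E_odd Nat.eqb]; lia.
Qed.

Lemma seeds_closed m :
  if Nat.even m then Bseq m = B_even (Z.of_nat m) /\ Lseq m = L_even (Z.of_nat m)
  else Bseq m = B_odd (Z.of_nat m) /\ Lseq m = L_odd (Z.of_nat m).
Proof.
  induction m as [|m IH].
  - split; matrix_ext; reflexivity.
  - cbn [Bseq Lseq]. unfold kidx.
    rewrite Nat.even_succ, <- Nat.negb_even, Nat2Z.inj_succ.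
    assert (Hz : 0 <= Z.of_nat m) by lia.
    destruct (Nat.even m); destruct IH as [-> ->]; cbn [negb].
    + rewrite mutB_even, mutL_even by exact Hz. split; reflexivity.
    + rewrite mutB_odd, mutL_odd by exact Hz. split; reflexivity.
Qed.

Definition vscale (z : Z) (a : vec) : vec :=
  match a with (a0,a1,a2,a3) => (z*a0, z*a1, z*a2, z*a3) end.

Lemma tpow_M a n : tpow (M a) n ≈ M (vscale (Z.of_nat n) a).
Proof.
  induction n as [|n IH]; cbn [tpow].
  - apply teq_single; [reflexivity..|vec_lia].
  - rewrite IH. unfold M, tmul. cbn [flat_map map app].
    apply teq_single; [ring| |rewrite Nat2Z.inj_succ; vec_lia].
    destruct_vecs. cbv beta iota delta [bform sum4 vget Lambda0 vscale]. ring.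
Qed.

Lemma frame_y (X : nat -> tor) L z : 0 <= z -> X 2%nat ≈ y1 -> X 3%nat ≈ y2 -> L 2%nat 3%nat = -2 ->
  frame X L (0,0,z+1,z) ≈ M (0,0,z+1,z).
Proof.
  intros Hz H2 H3 HL. unfold frame. cbn [vget tpow].
  rewrite H2, H3. unfold y1, y2. rewrite !tpow_M, !tmul_1l, !Z2Nat.id by lia.
  unfold M, tmul, tscale. cbn [flat_map map app].
  apply teq_single; [ring| |vec_lia].
  cbv beta iota delta [sum4 bform vget vscale Lambda0 Nat.ltb Nat.leb]. rewrite HL. ring.
Qed.

Lemma frame_x0 (X : nat -> tor) L : frame X L (2,0,0,0) ≈ tmul (X 0%nat) (X 0%nat).
Proof.
  unfold frame. cbn [vget]. change (Z.to_nat 2) with 2%nat. change (Z.to_nat 0) with 0%nat.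
  cbn [tpow]. replace (- _) with 0 by (cbv beta iota delta [sum4 vget Nat.ltb Nat.leb]; ring).
  rewrite tscale_0, ?tmul_1l, ?tmul_1r. reflexivity.
Qed.

Lemma frame_x1 (X : nat -> tor) L : frame X L (0,2,0,0) ≈ tmul (X 1%nat) (X 1%nat).
Proof.
  unfold frame. cbn [vget]. change (Z.to_nat 2) with 2%nat. change (Z.to_nat 0) with 0%nat.
  cbn [tpow]. replace (- _) with 0 by (cbv beta iota delta [sum4 vget Nat.ltb Nat.leb]; ring).
  rewrite tscale_0, ?tmul_1l, ?tmul_1r. reflexivity.
Qed.

Lemma exch_rhs_even (X : nat -> tor) z : 0 <= z -> X 2%nat ≈ y1 -> X 3%nat ≈ y2 ->
  exch_rhs X (B_even z) (L_even z) 0 ≈ tadd (tscale 1 (M (0,0,z+1,z))) (tmul (X 1%nat) (X 1%nat)).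
Proof.
  intros Hz H2 H3. unfold exch_rhs. cbv zeta.
  replace (vec_of (fun i => Z.max 0 (B_even z i 0))) with ((0,0,z+1,z) : vec)
    by (apply vec_eq; cbn; lia).
  replace (vec_of (fun i => Z.max 0 (- B_even z i 0))) with ((0,2,0,0) : vec)
    by (apply vec_eq; cbn; lia).
  rewrite frame_y, frame_x1 by auto.
  replace (bform (L_even z) (0,0,z+1,z) (vunit 0)) with 1
    by (cbv beta iota delta [bform sum4 vget vunit vec_of L_even Nat.eqb]; ring).
  replace (bform (L_even z) (0,2,0,0) (vunit 0)) with 0
    by (cbv beta iota delta [bform sum4 vget vunit vec_of L_even Nat.eqb]; ring).
  rewrite tscale_0. reflexivity.
Qed.

Lemma exch_rhs_odd (X : nat -> tor) z : 0 <= z -> X 2%nat ≈ y1 -> X 3%nat ≈ y2 ->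
  exch_rhs X (B_odd z) (L_odd z) 1 ≈ tadd (tscale 1 (M (0,0,z+1,z))) (tmul (X 0%nat) (X 0%nat)).
Proof.
  intros Hz H2 H3. unfold exch_rhs. cbv zeta.
  replace (vec_of (fun i => Z.max 0 (B_odd z i 1))) with ((0,0,z+1,z) : vec)
    by (apply vec_eq; cbn; lia).
  replace (vec_of (fun i => Z.max 0 (- B_odd z i 1))) with ((2,0,0,0) : vec)
    by (apply vec_eq; cbn; lia).
  rewrite frame_y, frame_x0 by auto.
  replace (bform (L_odd z) (0,0,z+1,z) (vunit 1)) with 1
    by (cbv beta iota delta [bform sum4 vget vunit vec_of L_odd Nat.eqb]; ring).
  replace (bform (L_odd z) (2,0,0,0) (vunit 1)) with 0
    by (cbv beta iota delta [bform sum4 vget vunit vec_of L_odd Nat.eqb]; ring).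
  rewrite tscale_0. reflexivity.
Qed.

Lemma exch_rhs_proper X X' B L k : (forall i, (i < 4)%nat -> X i ≈ X' i) ->
  exch_rhs X B L k ≈ exch_rhs X' B L k.
Proof.
  intros H. unfold exch_rhs, frame. cbv zeta.
  rewrite (H 0%nat), (H 1%nat), (H 2%nat), (H 3%nat) by lia. reflexivity.
Qed.

Definition cluster (m i : nat) : tor :=
  match i with
  | 2%nat => y1
  | 3%nat => y2
  | _ => if Nat.eqb i (kidx m) then xs m else xs (S m)
  end.

Lemma kidx_cases m : (kidx m = 0 /\ kidx (S m) = 1)%nat \/ (kidx m = 1 /\ kidx (S m) = 0)%nat.
Proof. unfold kidx. rewrite Nat.even_succ, <- Nat.negb_even. destruct (Nat.even m); auto. Qed.

Lemma cluster_kidx m : cluster m (kidx m) = xs m.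
Proof. unfold cluster. destruct (kidx_cases m) as [[-> _]|[-> _]]; reflexivity. Qed.

Lemma cluster_S_kidx m : cluster (S m) (kidx m) = xs (S (S m)).
Proof. unfold cluster. destruct (kidx_cases m) as [[-> ->]|[-> ->]]; reflexivity. Qed.

Lemma cluster_rhs m :
  exch_rhs (cluster m) (Bseq m) (Lseq m) (kidx m) ≈ tadd (ycoef m) (tmul (xs (S m)) (xs (S m))).
Proof.
  pose proof (seeds_closed m) as Hs. unfold cluster, kidx in *.
  destruct (Nat.even m); destruct Hs as [-> ->];
    [rewrite exch_rhs_even | rewrite exch_rhs_odd]; reflexivity || lia.
Qed.

Lemma cluster_valid : valid_seq cluster.
Proof.
  split.
  - intros i Hi. destruct_idx i; reflexivity || lia.
  - intros m. split.
    + intros i Hi Hne. unfold cluster.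
      destruct (kidx_cases m) as [[E E']|[E E']]; rewrite E, E' in *;
        destruct_idx i; reflexivity || lia.
    + rewrite cluster_kidx, cluster_S_kidx, cluster_rhs. apply xs_exchange.
Qed.

Lemma valid_seq_cluster X : valid_seq X -> forall m i, (i < 4)%nat -> X m i ≈ cluster m i.
Proof.
  intros [H0 HS] m. induction m as [|m IH]; intros i Hi.
  - rewrite H0 by exact Hi. destruct_idx i; reflexivity || lia.
  - destruct (HS m) as [Hkeep Hexch].
    destruct (proj2 cluster_valid m) as [Hkeepc _].
    destruct (Nat.eq_dec i (kidx m)) as [->|Hne].
    + rewrite cluster_S_kidx. apply (tmul_cancel_r (xs m)); [apply xs_nonzero|].
      transitivity (tmul (X (S m) (kidx m)) (X m (kidx m))).
      { rewrite (IH (kidx m)), cluster_kidx; [reflexivity | exact Hi]. }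
      rewrite Hexch, (exch_rhs_proper (X m) (cluster m)) by exact IH.
      rewrite cluster_rhs. symmetry. apply xs_exchange.
    + rewrite Hkeep, IH, Hkeepc by assumption. reflexivity.
Qed.

Lemma xvar_xs X : valid_seq X -> forall n, xvar X (S n) ≈ xs n.
Proof.
  intros HX [|[|n]]; cbn [xvar].
  - apply (valid_seq_cluster X HX 0 0). lia.
  - apply (valid_seq_cluster X HX 0 1). lia.
  - rewrite (valid_seq_cluster X HX (S n) (kidx n)), cluster_S_kidx; [reflexivity|].
    destruct (kidx_cases n) as [[-> _]|[-> _]]; lia.
Qed.

Lemma q_y1_y2 : tscale 2 (tmul y1 y2) ≈ y12.
Proof. by_computation. Qed.

Theorem mainTheorem6 :
  (exists X, valid_seq X) /\
  forall X : nat -> nat -> tor, valid_seq X ->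
  forall n : nat, (2 <= n)%nat ->
    teq (tmul (xvar X n) s1)
        (tadd (xvar X (S n)) (tscale 2 (tmul (tmul (xvar X (n - 1)) y1) y2))).
Proof.
  split; [exists cluster; exact cluster_valid|].
  intros X HX n Hn. destruct n as [|[|p]]; [lia | lia |].
  replace (S (S p) - 1)%nat with (S p) by lia.
  rewrite !(xvar_xs X HX), xs_rec, tmul_assoc, <- tmul_scaler, q_y1_y2.
  tor_lia.
Qed.
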